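(* Let $T=[(\texttt{@}\texttt{\$},1),(\sigma_1,p_1),\dots,(\sigma_{k-1},p_{k-1})]$ be a sequence of pairs with $k\ge2$, each $\sigma_d$ ($d\ge1$) a non-empty string over $\Sigma$ and each $p_d$ a non-negative integer. For $1\le d\le k-2$ write $a_d=\sigma_d[1]$ and $c_d=\sigma_d[|\sigma_d|]$. Then $T=\mathcal{F}(s)$ for some $s\in\Sigma^*$ if and only if: (1) for each $1\le d\le k-2$: $p_d\ge1$ and $|\sigma_d|-p_d\ge1$, the front $\sigma_d[1..p_d]$ is a single run of $a_d$, and the back $\sigma_d[p_d+1..|\sigma_d|]$ is a single run of $c_d$; (2) $p_{k-1}=0$ and $\sigma_{k-1}$ is either a single run $a^m$ or two adjacent runs $a^\ell c^b$ with $a\ne c$; (3) if $k\ge3$: for $1\le d\le k-3$, $a_{d+1}\ne a_d$ and $c_{d+1}\ne c_d$; and the first character of $\sigma_{k-1}$ differs from $a_{k-2}$ and the last character of $\sigma_{k-1}$ differs from $c_{k-2}$. (When $k=2$ only (1) and (2) apply.) Moreover, $\mathcal{F}(\mathcal{F}^{-1}(T))=T$ for every $T$ satisfying these conditions.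
   Context: Let $\Sigma$ be an alphabet and $\texttt{@},\texttt{\$}$ two distinct symbols not in $\Sigma$. For $s\in\Sigma^*$ with $|s|=n$ let $\hat s=\texttt{@}\,s\,\texttt{\$}$ (positions $1,\dots,n+2$); $\hat s[i..j)$ is the substring at positions $i,\dots,j-1$. A single run of $a$ is a string $a^m$, $m\ge1$. The leading (trailing) run of a non-empty string is its longest prefix (suffix) consisting of one repeated symbol. The Flashback decomposition $\mathcal{F}(s)$ is the sequence of tokens $(\sigma,p)$ produced as follows, starting from active span $[lo,hi)=[1,n+3)$: if $lo\ge hi$, stop. Let $\ell$ be the leading-run length of $\hat s[lo..hi)$. If $\ell=hi-lo$, append $(\hat s[lo..hi),0)$ and stop. Otherwise let $\hat s[r..hi)$ be the trailing run of $\hat s[lo..hi)$ and $\sigma=\hat s[lo..lo+\ell)\cdot\hat s[r..hi)$; if $lo+\ell\ge r$, append $(\sigma,0)$ and stop; otherwise append $(\sigma,\ell)$ and repeat with $[lo+\ell,r)$. For $T=[(\sigma_0,p_0),\dots,(\sigma_{k-1},p_{k-1})]$ define $N_{k-1}=\sigma_{k-1}$ and $N_i=\sigma_i[1..p_i]\cdot N_{i+1}\cdot\sigma_i[p_i+1..|\sigma_i|]$ for $i<k-1$; $\mathcal{F}^{-1}(T)$ is $N_0$ with its first and last characters removed. *)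

From mathcomp Require Import all_boot.
Set Implicit Arguments. Unset Strict Implicit. Unset Printing Implicit Defensive.

(* Extended alphabet Sigma ∪ {@, $}, encoded as option (option Sigma):
   @ = None, $ = Some None, a ∈ Sigma = Some (Some a). *)
Definition ext (S : Type) := option (option S).
Definition At {S : Type} : ext S := None.
Definition Dol {S : Type} : ext S := Some None.
Definition Ch {S : Type} (a : S) : ext S := Some (Some a).

Section Flashback.
Variable X : eqType.

Definition lead_run (w : seq X) : nat :=
  if w is x :: _ then find (predC1 x) w else 0.
Definition trail_run (w : seq X) : nat := lead_run (rev w).

(* One Flashback pass on the active substring w = hat s[lo..hi).
   0-indexed: ell = lead_run w, r = size w - trail_run w;
   sigma = w[0..ell) ++ w[r..size w); the next active span is w[ell..r).
   Recursion is guarded by a fuel argument, which is always sufficient when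
   fuel >= size w (each step strictly shrinks the active span). *)
Fixpoint flashback_aux (fuel : nat) (w : seq X) : seq (seq X * nat) :=
  match fuel with
  | 0 => [::]
  | fuel'.+1 =>
    if w is [::] then [::] else
    let ell := lead_run w in
    if ell == size w then [:: (w, 0)] else
    let r := size w - trail_run w in
    let sigma := take ell w ++ drop r w in
    if r <= ell then [:: (sigma, 0)]
    else (sigma, ell) :: flashback_aux fuel' (drop ell (take r w))
  end.

(* inverse: N_{k-1} = sigma_{k-1}, N_i = sigma_i[1..p_i] N_{i+1} sigma_i[p_i+1..] *)
Definition flashback_N (T : seq (seq X * nat)) : seq X :=
  match T with
  | [::] => [::]
  | _ => foldr (fun t N => take t.2 t.1 ++ N ++ drop t.2 t.1) [::] T
  end.

Definition strip (w : seq X) : seq X := take (size w - 2) (drop 1 w).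

End Flashback.

Section Hat.
Variable S : eqType.
Definition hat (s : seq S) : seq (ext S) := At :: rcons (map Ch s) Dol.

Definition flashback (s : seq S) : seq (seq (ext S) * nat) :=
  flashback_aux (size (hat s)).+1 (hat s).

Definition flashback_inv (T : seq (seq (ext S) * nat)) : seq (ext S) :=
  strip (flashback_N T).

Definition run_of (oa : option S) (w : seq S) : bool :=
  (w != [::]) && all (fun x => Some x == oa) w.

Definition ofirst (w : seq S) : option S := ohead w.
Definition olast (w : seq S) : option S := ohead (rev w).
End Hat.

From mathcomp Require Import all_boot zify.
Set Implicit Arguments. Unset Strict Implicit. Unset Printing Implicit Defensive.

(* A string a^l u c^m, where a^l and c^m are its maximal leading and trailing
   runs and u is non-empty, is sent by one Flashback step to the token
   (a^l c^m, l) followed by the decomposition of u; maximality of the runs means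
   that u neither starts with a nor ends with c.  When u is empty the string is
   one run or two distinct runs and a single token is emitted.  So, after the
   sentinel token (@$, 1), F(s) is a token list whose inner tokens are two runs
   split at p, whose last token is one run or two distinct runs, and whose
   consecutive tokens differ in their first and in their last letters.
   Conversely, on the string obtained from such a list by nesting each token
   around its successor, F peels the tokens off again one by one. *)

Section Runs.
Variable X : eqType.
Implicit Types (a c : X) (u v w : seq X).

Lemma ofirst_cat u v : u != [::] -> ofirst (u ++ v) = ofirst u.
Proof. by case: u. Qed.

Lemma olast_cat u v : v != [::] -> olast (u ++ v) = olast v.
Proof. by case/lastP: v => // v x _; rewrite /olast -rcons_cat !rev_rcons. Qed.

Lemma nseq_neq0 a l : 0 < l -> nseq l a != [::].
Proof. by case: l. Qed.

Lemma ofirst_nseq a l : 0 < l -> ofirst (nseq l a) = Some a.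
Proof. by case: l. Qed.

Lemma olast_nseq c m : 0 < m -> olast (nseq m c) = Some c.
Proof. by rewrite /olast rev_nseq; apply: ofirst_nseq. Qed.

Lemma run_of_nseq a l : run_of (Some a) (nseq l a) = (0 < l).
Proof. by rewrite /run_of all_nseq eqxx orbT andbT; case: l. Qed.

Lemma run_ofE a w : run_of (Some a) w -> w = nseq (size w) a.
Proof. by case/andP=> _ /all_pred1P. Qed.

Lemma lead_run_nseq_cat a l u :
  0 < l -> ofirst u != Some a -> lead_run (nseq l a ++ u) = l.
Proof.
case: l => // l _ ua; rewrite /lead_run /= eqxx /= find_cat has_nseq /= eqxx andbF size_nseq.
case: u ua => [|x u] /=; rewrite ?addn0 // => xa.
by rewrite ifT ?addn0 //; apply: contra_neq xa => ->.
Qed.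

Lemma trail_run_cat_nseq c m u :
  0 < m -> olast u != Some c -> trail_run (u ++ nseq m c) = m.
Proof. by move=> m0 uc; rewrite /trail_run rev_cat rev_nseq lead_run_nseq_cat. Qed.

Lemma split_lead_run w : w != [::] ->
  exists a l u, [/\ 0 < l, w = nseq l a ++ u & ofirst u != Some a].
Proof.
elim: w => // x [|y w] IH _; first by exists x, 1, [::].
have [a [l [u [l0 -> ua]]]] := IH isT.
case: (eqVneq x a) => [->|xa]; first by exists a, l.+1, u.
exists x, 1, (nseq l a ++ u); split => //.
by rewrite ofirst_cat ?nseq_neq0 // ofirst_nseq //; apply: contra_neq xa => -[].
Qed.

Lemma split_trail_run w : w != [::] ->
  exists c m u, [/\ 0 < m, w = u ++ nseq m c & olast u != Some c].
Proof.
move=> wn; have [|c [m [u [m0 wE uc]]]] := split_lead_run (w := rev w).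
  by rewrite -size_eq0 size_rev size_eq0.
exists c, m, (rev u); split => //; last by rewrite /olast revK.
by rewrite -[w]revK wE rev_cat rev_nseq.
Qed.

Variant run_shape_spec w : Prop :=
  | OneRun a l of 0 < l & w = nseq l a
  | TwoRuns a c l m of 0 < l & 0 < m & a != c & w = nseq l a ++ nseq m c
  | RunsAround a c l m u of 0 < l & 0 < m & u != [::] & ofirst u != Some a
      & olast u != Some c & w = nseq l a ++ u ++ nseq m c.

Lemma run_shapeP w : w != [::] -> run_shape_spec w.
Proof.
move=> /split_lead_run [a [l [u [l0 -> ua]]]].
case: (eqVneq u [::]) => [->|un]; first by apply: (OneRun l0); rewrite cats0.
have [c [m [v [m0 uE vc]]]] := split_trail_run un.
case: (eqVneq v [::]) => [v0|vn].
  apply: (TwoRuns (c := c) (m := m) l0 m0); last by rewrite uE v0.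
  by move: ua; rewrite uE v0 ofirst_nseq // eq_sym; apply: contra_neq => ->.
apply: (RunsAround l0 m0 vn _ vc); last by rewrite uE.
by rewrite uE ofirst_cat in ua.
Qed.

End Runs.

Section Step.
Variable X : eqType.
Implicit Types (a c : X) (w u : seq X).

Lemma flashback_auxS n w : w != [::] -> flashback_aux n.+1 w =
  if lead_run w == size w then [:: (w, 0)] else
  let sigma := take (lead_run w) w ++ drop (size w - trail_run w) w in
  if size w - trail_run w <= lead_run w then [:: (sigma, 0)] else
  (sigma, lead_run w) ::
    flashback_aux n (drop (lead_run w) (take (size w - trail_run w) w)).
Proof. by case: w. Qed.

Lemma flashback_aux_run n a l :
  0 < l -> flashback_aux n.+1 (nseq l a) = [:: (nseq l a, 0)].
Proof.
move=> l0; rewrite flashback_auxS ?nseq_neq0 //= -[nseq l a]cats0.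
by rewrite lead_run_nseq_cat // !size_cat size_nseq addn0 eqxx.
Qed.

Lemma flashback_aux_two_runs n a c l m : 0 < l -> 0 < m -> a != c ->
  flashback_aux n.+1 (nseq l a ++ nseq m c) = [:: (nseq l a ++ nseq m c, 0)].
Proof.
move=> l0 m0 ac; rewrite flashback_auxS /=; last by rewrite -size_eq0 size_cat size_nseq; lia.
rewrite lead_run_nseq_cat ?ofirst_nseq //; last by apply: contra_neq ac => -[].
rewrite trail_run_cat_nseq ?olast_nseq //.
rewrite size_cat !size_nseq addnK leqnn ifF; last by apply/eqP; lia.
by rewrite cat_take_drop.
Qed.

Lemma flashback_aux_peel n a c l m u : 0 < l -> 0 < m -> u != [::] ->
    ofirst u != Some a -> olast u != Some c ->
  flashback_aux n.+1 (nseq l a ++ u ++ nseq m c) =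
  (nseq l a ++ nseq m c, l) :: flashback_aux n u.
Proof.
move=> l0 m0 un ua uc; rewrite flashback_auxS /=; last first.
  by rewrite -size_eq0 !size_cat size_nseq; lia.
rewrite lead_run_nseq_cat ?ofirst_cat //.
rewrite catA trail_run_cat_nseq ?olast_cat //.
have su : 0 < size u by rewrite lt0n size_eq0.
rewrite !size_cat !size_nseq ifF; last by apply/eqP; lia.
rewrite addnK ifF; last by apply/negbTE; rewrite -ltnNge; lia.
have lu : l + size u = size (nseq l a ++ u) by rewrite size_cat size_nseq.
rewrite lu drop_size_cat // [take (size _) _]take_size_cat //.
by rewrite -catA take_size_cat ?size_nseq // drop_size_cat ?size_nseq.
Qed.

End Step.

Section Tokens.
Variable X : eqType.
Implicit Types (a c : X) (w : seq X) (t : seq X * nat) (ts : seq (seq X * nat)).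

Lemma flashback_N_cons t ts :
  flashback_N (t :: ts) = take t.2 t.1 ++ flashback_N ts ++ drop t.2 t.1.
Proof. by case: ts. Qed.

Lemma flashback_N_last w : flashback_N [:: (w, 0)] = w.
Proof. by rewrite flashback_N_cons take0 drop0. Qed.

Definition inner_token (t : seq X * nat) : Prop :=
  [/\ 0 < t.2, 0 < size t.1 - t.2,
      run_of (ofirst t.1) (take t.2 t.1) & run_of (olast t.1) (drop t.2 t.1)].

Definition last_token (t : seq X * nat) : Prop :=
  t.2 = 0 /\
  ((exists a, run_of (Some a) t.1) \/
   (exists a c l m, [/\ 0 < l, 0 < m, a != c & t.1 = nseq l a ++ nseq m c])).

Fixpoint flashback_valid (ts : seq (seq X * nat)) : Prop :=
  if ts is t :: ts' then
    if ts' is t' :: _ then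
      [/\ inner_token t, ofirst t'.1 != ofirst t.1, olast t'.1 != olast t.1
        & flashback_valid ts']
    else last_token t
  else False.

Lemma inner_token_split w p : inner_token (w, p) -> exists a c,
  [/\ take p w = nseq p a, drop p w = nseq (size w - p) c,
      ofirst w = Some a & olast w = Some c].
Proof.
case=> /= p0 q0 rt rd.
have [a wa] : exists a, ofirst w = Some a by case: w q0 {rt rd} => // x w; exists x.
have [c wc] : exists c, olast w = Some c.
  by case/lastP: w q0 {rt rd wa} => // w x; exists x; rewrite /olast rev_rcons.
exists a, c; split => //; rewrite ?wa ?wc in rt rd.
- by rewrite (run_ofE rt) size_take; case: ltnP => //; lia.
- by rewrite (run_ofE rd) size_drop.
Qed.

Lemma inner_token_nseq a c l m :
  0 < l -> 0 < m -> inner_token (nseq l a ++ nseq m c, l).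
Proof.
move=> l0 m0; split => //=; rewrite ?size_cat ?size_nseq ?addKn //.
- by rewrite ofirst_cat ?nseq_neq0 // ofirst_nseq // take_size_cat ?size_nseq // run_of_nseq.
- by rewrite olast_cat ?nseq_neq0 // olast_nseq // drop_size_cat ?size_nseq // run_of_nseq.
Qed.

Lemma flashback_N_ends t ts : flashback_valid (t :: ts) ->
  [/\ flashback_N (t :: ts) != [::], ofirst (flashback_N (t :: ts)) = ofirst t.1
    & olast (flashback_N (t :: ts)) = olast t.1].
Proof.
case: t => w p; case: ts => [|t' ts].
  case=> p0 h; rewrite /= in p0 h; rewrite p0 flashback_N_last; split => //.
  by case: h => [[a /andP []] | [a [c [[|l] [m [l0 _ _ /= ->]]]]]].
case=> /[dup] [[p0 q0 _ _]] /inner_token_split [a [c [ta dc wa wc]]] _ _ _.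
rewrite flashback_N_cons ta dc wa wc ofirst_cat ?nseq_neq0 // ofirst_nseq //.
rewrite catA olast_cat ?nseq_neq0 // olast_nseq //; split => //.
by case: (p) p0.
Qed.

Lemma flashback_auxK n w : size w < n -> flashback_N (flashback_aux n w) = w.
Proof.
elim: n w => [|n IH] w // sw; case: (eqVneq w [::]) => [-> //|wn].
case: (run_shapeP wn) => [a l l0 -> | a c l m l0 m0 ac -> | a c l m u l0 m0 un ua uc wE].
- by rewrite flashback_aux_run // flashback_N_last.
- by rewrite flashback_aux_two_runs // flashback_N_last.
have su : size u < n by move: sw; rewrite wE !size_cat !size_nseq; lia.
rewrite wE flashback_aux_peel // flashback_N_cons IH //=.
by rewrite take_size_cat ?drop_size_cat ?size_nseq.
Qed.

Lemma flashback_aux_valid n w : w != [::] -> size w < n ->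
  flashback_valid (flashback_aux n w).
Proof.
elim: n w => [|n IH] w wn // sw.
case: (run_shapeP wn) => [a l l0 -> | a c l m l0 m0 ac -> | a c l m u l0 m0 un ua uc wE].
- by rewrite flashback_aux_run //; split => //; left; exists a; rewrite run_of_nseq.
- by rewrite flashback_aux_two_runs //; split => //; right; exists a, c, l, m.
have su : size u < n by move: sw; rewrite wE !size_cat !size_nseq; lia.
rewrite wE flashback_aux_peel //; have := flashback_auxK su.
case: (flashback_aux n u) (IH u un su) => // t' ts uV uN.
have [_ t'a t'c] := flashback_N_ends uV; rewrite uN in t'a t'c.
split => //; first exact: inner_token_nseq.
- by rewrite /= -t'a ofirst_cat ?nseq_neq0 // ofirst_nseq.
- by rewrite /= -t'c olast_cat ?nseq_neq0 // olast_nseq.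
Qed.

Lemma flashback_NK n ts : flashback_valid ts -> size (flashback_N ts) < n ->
  flashback_aux n (flashback_N ts) = ts.
Proof.
elim: ts n => [|[w p] ts IH] [|n] //; case: ts IH => [|t' ts] IH.
  case=> p0 h _; rewrite /= in p0 h; rewrite p0 flashback_N_last.
  case: h => [[a /[dup] /run_ofE wE /andP [wn _]] | [a [c [l [m [l0 m0 ac wE]]]]]].
    by rewrite wE flashback_aux_run // lt0n size_eq0.
  by rewrite wE flashback_aux_two_runs.
case=> /[dup] [[p0 q0 _ _]] /inner_token_split [a [c [ta dc wa wc]]] t'a t'c V.
rewrite /= in p0 q0; have [N'n N'a N'c] := flashback_N_ends V.
rewrite flashback_N_cons ta dc => sN.
rewrite flashback_aux_peel ?N'a ?N'c -?wa -?wc //.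
by rewrite -ta -dc cat_take_drop IH //; move: sN; rewrite !size_cat !size_nseq; lia.
Qed.

End Tokens.

Section Relabel.
Variables (X Y : eqType) (f : X -> Y).
Hypothesis f_inj : injective f.

Definition map_token (t : seq X * nat) : seq Y * nat := (map f t.1, t.2).

Lemma map_token_inj : injective map_token.
Proof. by case=> w p [w' p'] [/(inj_map f_inj) -> ->]. Qed.

Lemma flashback_N_map ts : flashback_N (map map_token ts) = map f (flashback_N ts).
Proof.
by elim: ts => [|t ts IH] //; rewrite !flashback_N_cons IH !map_cat map_take map_drop.
Qed.

Lemma lead_run_map w : lead_run (map f w) = lead_run w.
Proof.
case: w => [|x w] //; rewrite /lead_run /= !eqxx find_map.
by congr _.+1; apply: eq_find => y /=; rewrite inj_eq.
Qed.

Lemma trail_run_map w : trail_run (map f w) = trail_run w.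
Proof. by rewrite /trail_run -map_rev lead_run_map. Qed.

Lemma flashback_aux_map n w :
  flashback_aux n (map f w) = map map_token (flashback_aux n w).
Proof.
elim: n w => [|n IH] [|x w] //.
rewrite !flashback_auxS // lead_run_map trail_run_map size_map.
move: (x :: w) => v; case: ifP => _ //=.
by case: ifP => _; rewrite /map_token /= map_cat map_take map_drop // -!map_take -!map_drop IH.
Qed.

End Relabel.

Section Conditions.
Variable X : eqType.

Lemma flashback_valid_iota (g : nat -> seq X * nat) m n :
  flashback_valid [seq g d | d <- iota m n.+1] <->
  (forall d, m <= d < m + n ->
     [/\ inner_token (g d), ofirst (g d.+1).1 != ofirst (g d).1
       & olast (g d.+1).1 != olast (g d).1]) /\
  last_token (g (m + n)).
Proof.
elim: n m => [|n IH] m.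
  by rewrite addn0; split=> [|[]] //; split=> // d; lia.
have -> : flashback_valid [seq g d | d <- iota m n.+2] <->
    [/\ inner_token (g m), ofirst (g m.+1).1 != ofirst (g m).1
       & olast (g m.+1).1 != olast (g m).1] /\
    flashback_valid [seq g d | d <- iota m.+1 n.+1].
  by split=> [[]|[[]]].
rewrite IH addSnnS; split.
  move=> [hm [hd hlast]]; split => // d /andP [md dn].
  by case: (eqVneq d m) => [-> //|dm]; apply: hd; lia.
move=> [hd hlast]; split; first by apply: hd; lia.
by split => // d dn; apply: hd; lia.
Qed.

Definition flashback_conditions (k : nat) (sig : nat -> seq X) (p : nat -> nat) : Prop :=
  (forall d, 1 <= d <= k - 2 -> inner_token (sig d, p d)) /\
  last_token (sig k.-1, p k.-1) /\
  (3 <= k ->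
     (forall d, 1 <= d <= k - 3 ->
        ofirst (sig d.+1) != ofirst (sig d) /\ olast (sig d.+1) != olast (sig d)) /\
     ofirst (sig k.-1) != ofirst (sig (k - 2)) /\ olast (sig k.-1) != olast (sig (k - 2))).

Lemma flashback_conditions_valid k sig p : 2 <= k ->
  flashback_conditions k sig p <-> flashback_valid [seq (sig d, p d) | d <- iota 1 k.-1].
Proof.
case: k => [|[|n]] // _; rewrite flashback_valid_iota /flashback_conditions add1n.
have -> : n.+2 - 2 = n by lia.
have -> : n.+2 - 3 = n.-1 by lia.
split.
  move=> [hin [hlast hneq]]; split => // d /andP [d1 dn].
  have [hd [hf hl]] := hneq (ltac:(lia)).
  split; first by apply: hin; lia.
  - have [dn'|->] : d < n \/ d = n by lia.
    + by apply: (hd d _).1; lia.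
    + by [].
  - have [dn'|->] : d < n \/ d = n by lia.
    + by apply: (hd d _).2; lia.
    + by [].
move=> [hd hlast]; split.
  by move=> d dn; have /hd[] : 0 < d < n.+1 by lia.
split => // n1; split.
  by move=> d dn; have /hd[] : 0 < d < n.+1 by lia.
by have /hd[] : 0 < n < n.+1 by lia.
Qed.

End Conditions.

Section Sentinels.
Variable S : eqType.
Implicit Types (s : seq S) (V : seq (seq S * nat)).

Lemma Ch_inj : injective (@Ch S).
Proof. by move=> x y []. Qed.

Lemma flashback_cons s : s != [::] ->
  flashback s = ([:: At; Dol], 1) :: map (map_token Ch) (flashback_aux (size s).+2 s).
Proof.
move=> sn; rewrite /flashback (_ : size (hat s) = (size s).+2); last first.
  by rewrite /= size_rcons size_map.
rewrite (_ : hat s = nseq 1 At ++ map Ch s ++ nseq 1 Dol); last by rewrite /hat -cats1.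
rewrite flashback_aux_peel ?flashback_aux_map //; first exact: Ch_inj.
- by case: s sn.
- by case: s sn.
- by rewrite /olast -map_rev; case: (rev s).
Qed.

Lemma flashback_inv_cons V :
  flashback_inv (([:: At; Dol], 1) :: map (map_token Ch) V) = map Ch (flashback_N V).
Proof.
rewrite /flashback_inv /strip flashback_N_cons flashback_N_map /=.
by rewrite drop0 size_cat addn1 !subSS subn0 take_size_cat.
Qed.

Lemma flashback_flashback_N V : flashback_valid V ->
  flashback (flashback_N V) = ([:: At; Dol], 1) :: map (map_token Ch) V.
Proof.
move=> vV; have NV : flashback_N V != [::] by case: V vV => // t ts /flashback_N_ends[].
by rewrite flashback_cons // flashback_NK.
Qed.

Lemma flashback_tokens_valid s V :
  flashback s = ([:: At; Dol], 1) :: map (map_token Ch) V -> flashback_valid V.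
Proof.
case: (eqVneq s [::]) => [-> []|sn] //.
rewrite flashback_cons // => -[/(inj_map (map_token_inj Ch_inj)) <-].
exact: flashback_aux_valid sn (leqnSn _).
Qed.

End Sentinels.

Theorem theorem6p9 (S : eqType) (k : nat) (sig : nat -> seq S) (p : nat -> nat) :
  2 <= k ->
  (forall d, 1 <= d <= k.-1 -> sig d != [::]) ->
  let T := ([:: At; Dol], 1) :: [seq (map Ch (sig d), p d) | d <- iota 1 k.-1] in
  let cond :=
    (* (1) *)
    (forall d, 1 <= d <= k - 2 ->
       [/\ 1 <= p d, 1 <= size (sig d) - p d,
           run_of (ofirst (sig d)) (take (p d) (sig d))
         & run_of (olast (sig d)) (drop (p d) (sig d))]) /\
    (* (2) *)
    (p k.-1 = 0 /\
     ((exists a : S, run_of (Some a) (sig k.-1)) \/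
      (exists (a c : S) (l b : nat), [/\ 1 <= l, 1 <= b, a != c
                                     & sig k.-1 = nseq l a ++ nseq b c]))) /\
    (* (3) *)
    (3 <= k ->
       (forall d, 1 <= d <= k - 3 ->
          ofirst (sig d.+1) != ofirst (sig d) /\ olast (sig d.+1) != olast (sig d)) /\
       ofirst (sig k.-1) != ofirst (sig (k - 2)) /\
       olast (sig k.-1) != olast (sig (k - 2))) in
  ((exists s : seq S, T = flashback s) <-> cond) /\
  (cond -> exists s : seq S, flashback_inv T = map Ch s /\ flashback s = T).
Proof.
(* The non-emptiness of the [sig d] is implied by [cond]. *)
move=> k2 _ T cond.
set V := [seq (sig d, p d) | d <- iota 1 k.-1].
have condE : cond <-> flashback_valid V := flashback_conditions_valid sig p k2.
have -> : T = ([:: At; Dol], 1) :: map (map_token Ch) V by rewrite /T /V -map_comp.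
split; [split|].
- by move=> [s /esym /flashback_tokens_valid /condE].
- by move/condE/flashback_flashback_N => <-; exists (flashback_N V).
- move/condE => vV; exists (flashback_N V).
  by rewrite flashback_inv_cons flashback_flashback_N.
Qed.
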